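(* Let $c\ge 0$ be a fixed constant. For all sufficiently large $n$ the following holds: if $G$ is a $c\log n$-random labeled graph on $n$ nodes, then for every node $i$, every other node is either adjacent to $i$ or adjacent to at least one of the $(c+3)\log n$ smallest-labeled neighbours of $i$.
   Context: $\log$ is the binary logarithm; $C(x\mid y)$ is Kolmogorov complexity with respect to a fixed universal Turing machine. A labeled graph $G$ on $\{1,\dots,n\}$ is encoded by the binary string $E(G)$ of length $n(n-1)/2$ whose $i$-th bit indicates presence of the $i$-th possible edge in lexicographic order. With $\mathcal G$ the set of all labeled graphs on $\{1,\dots,n\}$, $G$ is $\delta(n)$-random if $C(E(G)\mid n,\delta,\mathcal G)\ge n(n-1)/2-\delta(n)$. *)

From Stdlib Require Import Reals.
From HB Require Import structures.
From mathcomp Require Import all_boot.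

Set Implicit Arguments.
Unset Strict Implicit.
Unset Printing Implicit Defensive.

Definition cpair (a b : nat) : nat := ((a + b) * (a + b).+1)./2 + b.

Inductive code : Type :=
| cZero | cSucc | cId | cFst | cSnd
| cComp of code & code
| cPair of code & code
| cRec  of code & code
| cMu   of code.

Inductive eval : code -> nat -> nat -> Prop :=
| eZero x : eval cZero x 0
| eSucc x : eval cSucc x x.+1
| eId x : eval cId x x
| eFst a b : eval cFst (cpair a b) a
| eSnd a b : eval cSnd (cpair a b) b
| eComp f g x y z : eval g x y -> eval f y z -> eval (cComp f g) x z
| ePair f g x a b : eval f x a -> eval g x b -> eval (cPair f g) x (cpair a b)
| eRec0 f g a y : eval f a y -> eval (cRec f g) (cpair a 0) y
| eRecS f g a n r y : eval (cRec f g) (cpair a n) r ->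
    eval g (cpair a (cpair n r)) y -> eval (cRec f g) (cpair a n.+1) y
| eMu f x n : eval f (cpair x n) 0 ->
    (forall m, m < n -> exists k, eval f (cpair x m) k.+1) ->
    eval (cMu f) x n.

(* Goedel numbering of codes (via MathComp's countType machinery). *)
Fixpoint code_to_tree (c : code) : GenTree.tree nat :=
  match c with
  | cZero => GenTree.Leaf 0
  | cSucc => GenTree.Leaf 1
  | cId => GenTree.Leaf 2
  | cFst => GenTree.Leaf 3
  | cSnd => GenTree.Leaf 4
  | cComp f g => GenTree.Node 0 [:: code_to_tree f; code_to_tree g]
  | cPair f g => GenTree.Node 1 [:: code_to_tree f; code_to_tree g]
  | cRec f g => GenTree.Node 2 [:: code_to_tree f; code_to_tree g]
  | cMu f => GenTree.Node 3 [:: code_to_tree f]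
  end.

Fixpoint tree_to_code (t : GenTree.tree nat) : option code :=
  match t with
  | GenTree.Leaf 0 => Some cZero
  | GenTree.Leaf 1 => Some cSucc
  | GenTree.Leaf 2 => Some cId
  | GenTree.Leaf 3 => Some cFst
  | GenTree.Leaf 4 => Some cSnd
  | GenTree.Leaf _ => None
  | GenTree.Node k ts =>
      match k, ts with
      | 0, [:: t1; t2] =>
          match tree_to_code t1, tree_to_code t2 with
          | Some f, Some g => Some (cComp f g) | _, _ => None end
      | 1, [:: t1; t2] =>
          match tree_to_code t1, tree_to_code t2 with
          | Some f, Some g => Some (cPair f g) | _, _ => None end
      | 2, [:: t1; t2] =>
          match tree_to_code t1, tree_to_code t2 with
          | Some f, Some g => Some (cRec f g) | _, _ => None end
      | 3, [:: t1] =>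
          match tree_to_code t1 with Some f => Some (cMu f) | None => None end
      | _, _ => None
      end
  end.

Lemma code_treeK : pcancel code_to_tree tree_to_code.
Proof. by elim=> //= [f IHf g IHg|f IHf g IHg|f IHf g IHg|f IHf]; rewrite ?IHf ?IHg. Qed.

HB.instance Definition _ := Countable.copy code (pcan_type code_treeK).

(* Bijective base-2 numeration: a bijection between bit strings and nat. *)
Fixpoint b2n (s : seq bool) : nat :=
  match s with
  | [::] => 0
  | b :: s' => (b2n s').*2 + (if b then 2 else 1)
  end.

(* U(p, y) = x  iff  the e-th partial recursive function maps <q, y> to x.
   (Unary self-delimiting prefix makes U additively optimal.)             *)
Definition U (p : seq bool) (y : nat) (x : nat) : Prop :=
  exists e q c, p = nseq e true ++ false :: q /\
    unpickle e = Some c /\ eval c (cpair (b2n q) y) x.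

(* "C(x | y) >= m" for the plain conditional Kolmogorov complexity
   C(x|y) = min { |p| : U(p, y) = x } (unfolded form of the minimum). *)
Definition C_ge (x : seq bool) (y : nat) (m : R) : Prop :=
  forall p, U p y (b2n x) -> Rle m (INR (size p)).

Definition log2 (x : R) : R := Rdiv (ln x) (ln 2).

(* labeled graph on {0,...,n-1} (labels shifted by one) *)
Definition is_graph n (G : rel 'I_n) : Prop :=
  irreflexive G /\ symmetric G.

Definition lexpairs n : seq ('I_n * 'I_n) :=
  flatten [seq [seq (i, j) | j <- [seq j <- enum 'I_n | (nat_of_ord i < nat_of_ord j)%N]]
           | i <- enum 'I_n].

Definition E n (G : rel 'I_n) : seq bool := [seq G p.1 p.2 | p <- lexpairs n].

(* conditional information (n, delta, calG): calG is determined by n, and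
   delta(n) enters the randomness test only through floor(delta(n)). *)
Definition cond (n : nat) (d : R) : nat := cpair n (Z.to_nat (Int_part d)).

Definition random n (G : rel 'I_n) (d : R) : Prop :=
  C_ge (E G) (cond n d) (Rminus (INR (n * (n - 1) %/ 2)) d).

(* h is among the k smallest-labeled neighbours of i (k real: fewer than k
   neighbours of i have a smaller label than h) *)
Definition small_nbr n (G : rel 'I_n) (k : R) (i h : 'I_n) : Prop :=
  G i h /\ Rlt (INR #|[set h' | G i h' & (h' < h)%N]|) k.

From Stdlib Require Import Reals Lia Lra ZArith Classical FunctionalExtensionality.
From HB Require Import structures.
From mathcomp Require Import all_boot zify.

Set Implicit Arguments.
Unset Strict Implicit.
Unset Printing Implicit Defensive.

(* Suppose [j] is adjacent neither to [i] nor to any of the first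
   K = (c + 3) log n neighbours of [i], and let L = n(n-1)/2. If [i] has at
   least K neighbours, the K bits of E(G) recording the edges from [j] to these
   neighbours are all 0, which leaves at most 2^(L-K) possible strings. If [i]
   has fewer than K neighbours, the n - 1 bits of the row of [i] can be
   replaced by the list of its neighbours, which leaves at most
   2^(L+1-n) (n+1)^K strings. The set of strings with this property is
   decidable from (n, i, j, K), so E(G) is computed from i, j, and its rank r
   in that set by a fixed program searching through all strings. This is a
   description of E(G) given (n, floor(c log n)) of length
   2 log n + L - K + O(1) = L - (c + 1) log n + O(1), which for large n
   contradicts the c log n randomness of G. *)

(** * Cantor pairing *)

Fixpoint unpair (x : nat) : nat * nat :=
  if x is x'.+1 then
    let: (a, b) := unpair x' in if a is a'.+1 then (a', b.+1) else (b.+1, 0)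
  else (0, 0).

Lemma unpairS x : unpair x.+1 =
  let: (a, b) := unpair x in if a is a'.+1 then (a', b.+1) else (b.+1, 0).
Proof. by []. Qed.

Lemma cpairSr a b : cpair a b.+1 = (cpair a.+1 b).+1.
Proof. by rewrite /cpair addnS addSn addnS. Qed.

Lemma cpairS0 b : cpair b.+1 0 = (cpair 0 b).+1.
Proof.
rewrite /cpair !addn0 add0n -!divn2.
have -> : b.+1 * b.+2 = b * b.+1 + b.+1 * 2 by nia.
by rewrite divnDMl // ?addnS ?addn1.
Qed.

Definition unpair1 x := (unpair x).1.
Definition unpair2 x := (unpair x).2.

Lemma cpair_unpair x : cpair (unpair1 x) (unpair2 x) = x.
Proof.
rewrite /unpair1 /unpair2; elim: x => [|x IH] //; rewrite unpairS.
case: (unpair x) IH => [[|a] b] /= IH; first by rewrite cpairS0 IH.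
by rewrite cpairSr IH.
Qed.

Lemma unpair_cpair a b : unpair (cpair a b) = (a, b).
Proof.
move: {2}(a + b) (erefl (a + b)) => s; elim: s a b => [|s IHs] a b.
  by case: a b => [|a] [|b].
elim: b a => [|b IHb] a.
  by rewrite addn0 => ->; rewrite cpairS0 unpairS (IHs 0 s).
by move=> Hs; rewrite cpairSr unpairS (IHb a.+1) // addSn -addnS.
Qed.

Lemma unpair1_cpair a b : unpair1 (cpair a b) = a.
Proof. by rewrite /unpair1 unpair_cpair. Qed.

Lemma unpair2_cpair a b : unpair2 (cpair a b) = b.
Proof. by rewrite /unpair2 unpair_cpair. Qed.

(** * Computable functions *)

Definition computable (f : nat -> nat) := exists c, forall x, eval c x (f x).

Definition computable_pred (P : nat -> bool) := computable (fun x => nat_of_bool (P x)).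

Lemma eq_computable f g : f =1 g -> computable f -> computable g.
Proof. by move=> E [c Hc]; exists c => x; rewrite -E. Qed.

Lemma computable_id : computable id.
Proof. by exists cId => x; apply: eId. Qed.

Lemma computable_comp f g : computable f -> computable g -> computable (fun x => f (g x)).
Proof.
by move=> [cf Hf] [cg Hg]; exists (cComp cf cg) => x; apply: eComp (Hg x) (Hf _).
Qed.

Lemma computable_succ f : computable f -> computable (fun x => (f x).+1).
Proof. by apply: computable_comp; exists cSucc => x; apply: eSucc. Qed.

Lemma computable_const k : computable (fun _ => k).
Proof.
elim: k => [|k]; last exact: computable_succ.
by exists cZero => x; apply: eZero.
Qed.

Lemma computable_unpair1 f : computable f -> computable (fun x => unpair1 (f x)).
Proof.
apply: computable_comp; exists cFst => x.
by rewrite -{1}(cpair_unpair x); apply: eFst.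
Qed.

Lemma computable_unpair2 f : computable f -> computable (fun x => unpair2 (f x)).
Proof.
apply: computable_comp; exists cSnd => x.
by rewrite -{1}(cpair_unpair x); apply: eSnd.
Qed.

Lemma computable_cpair f g :
  computable f -> computable g -> computable (fun x => cpair (f x) (g x)).
Proof. by move=> [cf Hf] [cg Hg]; exists (cPair cf cg) => x; apply: ePair. Qed.

Fixpoint primrec (f g : nat -> nat) (a n : nat) : nat :=
  if n is n'.+1 then g (cpair a (cpair n' (primrec f g a n'))) else f a.

Lemma computable_primrec f g : computable f -> computable g ->
  computable (fun x => primrec f g (unpair1 x) (unpair2 x)).
Proof.
move=> [cf Hf] [cg Hg]; exists (cRec cf cg) => x.
rewrite -{1}(cpair_unpair x); elim: (unpair2 x) => [|n IH] /=.
  exact: eRec0.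
exact: eRecS IH (Hg _).
Qed.

(* The step [s w k a] reads its arguments from [cpair w (cpair k a)]. *)
Lemma computable_iter (i B : nat -> nat) (s : nat -> nat -> nat -> nat)
    (F : nat -> nat -> nat) :
  (forall w, F w 0 = i w) -> (forall w k, F w k.+1 = s w k (F w k)) ->
  computable i ->
  computable (fun u => s (unpair1 u) (unpair1 (unpair2 u)) (unpair2 (unpair2 u))) ->
  computable B -> computable (fun w => F w (B w)).
Proof.
move=> F0 FS Hi Hs HB.
have HF a n : primrec i (fun u =>
    s (unpair1 u) (unpair1 (unpair2 u)) (unpair2 (unpair2 u))) a n = F a n.
  by elim: n => [|n IH] /=; rewrite ?F0 // unpair1_cpair !unpair2_cpair unpair1_cpair IH FS.
apply: eq_computable (computable_comp (computable_primrec Hi Hs)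
                                      (computable_cpair computable_id HB)).
by move=> w; rewrite unpair1_cpair unpair2_cpair HF.
Qed.

Lemma computable_acc : computable (fun u => unpair2 (unpair2 u)).
Proof. exact/computable_unpair2/computable_unpair2/computable_id. Qed.

Lemma computable_env f : computable f -> computable (fun u => f (unpair1 u)).
Proof. by move=> Hf; apply: computable_comp Hf (computable_unpair1 computable_id). Qed.

Lemma computable_add f g : computable f -> computable g -> computable (fun x => f x + g x).
Proof.
move=> Hf; apply: (@computable_iter f g (fun _ _ a => a.+1) (fun x k => f x + k)) => //.
- by move=> w; rewrite addn0.
- by move=> w k; rewrite addnS.
- exact/computable_succ/computable_acc.
Qed.

Lemma computable_mul f g : computable f -> computable g -> computable (fun x => f x * g x).
Proof.
move=> Hf; apply: (@computable_iter (fun _ => 0) g (fun w _ a => a + f w)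
                                   (fun x k => f x * k)).
- by move=> w; rewrite muln0.
- by move=> w k; rewrite mulnS addnC.
- exact: computable_const.
- exact: computable_add computable_acc (computable_env Hf).
Qed.

Lemma computable_predn f : computable f -> computable (fun x => (f x).-1).
Proof.
apply: (@computable_iter (fun _ => 0) f (fun _ k _ => k) (fun _ k => k.-1)) => //.
- exact: computable_const.
- exact/computable_unpair1/computable_unpair2/computable_id.
Qed.

Lemma computable_sub f g : computable f -> computable g -> computable (fun x => f x - g x).
Proof.
move=> Hf; apply: (@computable_iter f g (fun _ _ a => a.-1) (fun x k => f x - k)) => //.
- by move=> w; rewrite subn0.
- by move=> w k; rewrite subnS.
- exact/computable_predn/computable_acc.
Qed.

Lemma computable_exp f g : computable f -> computable g -> computable (fun x => f x ^ g x).
Proof.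
move=> Hf; apply: (@computable_iter (fun _ => 1) g (fun w _ a => a * f w)
                                   (fun x k => f x ^ k)).
- by move=> w; rewrite expn0.
- by move=> w k; rewrite expnS mulnC.
- exact: computable_const.
- exact: computable_mul computable_acc (computable_env Hf).
Qed.

Lemma computable_leq f g : computable f -> computable g ->
  computable_pred (fun x => f x <= g x).
Proof.
move=> Hf Hg; apply: (@eq_computable (fun x => 1 - (f x - g x))).
  by move=> x /=; case: leqP => h; lia.
exact: computable_sub (computable_const 1) (computable_sub Hf Hg).
Qed.

Lemma computable_and P Q : computable_pred P -> computable_pred Q ->
  computable_pred (fun x => P x && Q x).
Proof.
move=> HP HQ; apply: eq_computable (computable_mul HP HQ).
by move=> x /=; case: (P x); case: (Q x).
Qed.

Lemma computable_neg P : computable_pred P -> computable_pred (fun x => ~~ P x).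
Proof.
move=> HP; apply: eq_computable (computable_sub (computable_const 1) HP).
by move=> x /=; case: (P x).
Qed.

Lemma computable_or P Q : computable_pred P -> computable_pred Q ->
  computable_pred (fun x => P x || Q x).
Proof.
move=> HP HQ; apply: eq_computable
  (computable_neg (computable_and (computable_neg HP) (computable_neg HQ))).
by move=> x /=; case: (P x); case: (Q x).
Qed.

Lemma computable_eq f g : computable f -> computable g ->
  computable_pred (fun x => f x == g x).
Proof.
move=> Hf Hg; apply: eq_computable
  (computable_and (computable_leq Hf Hg) (computable_leq Hg Hf)).
by move=> x; rewrite eqn_leq.
Qed.

Lemma computable_if P f g : computable_pred P -> computable f -> computable g ->
  computable (fun x => if P x then f x else g x).
Proof.
move=> HP Hf Hg; apply: (@eq_computable
  (fun x => P x * f x + (1 - P x) * g x)).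
  by move=> x; case: (P x); rewrite ?mul1n ?mul0n ?addn0.
apply: computable_add; apply: computable_mul => //.
exact: computable_sub (computable_const 1) HP.
Qed.

Lemma computable_odd f : computable f -> computable_pred (fun x => odd (f x)).
Proof.
apply: (@computable_iter (fun _ => 0) f (fun _ _ a => 1 - a)
                         (fun _ k => nat_of_bool (odd k))) => //.
- by move=> w k /=; case: (odd k).
- exact: computable_const.
- exact: computable_sub (computable_const 1) computable_acc.
Qed.

Fixpoint bsum (F : nat -> nat) (m : nat) : nat :=
  if m is m'.+1 then bsum F m' + F m' else 0.

Fixpoint ball (P : nat -> bool) (m : nat) : bool :=
  if m is m'.+1 then ball P m' && P m' else true.

Lemma computable_step_args (F : nat -> nat -> nat) :
  computable (fun u => F (unpair1 u) (unpair2 u)) ->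
  computable (fun u => F (unpair1 u) (unpair1 (unpair2 u))).
Proof.
move=> HF; apply: eq_computable (computable_comp HF (computable_cpair
  (computable_unpair1 computable_id) (computable_unpair1 (computable_unpair2 computable_id)))).
by move=> u; rewrite unpair1_cpair unpair2_cpair.
Qed.

Lemma computable_bsum (F : nat -> nat -> nat) B :
  computable (fun u => F (unpair1 u) (unpair2 u)) -> computable B ->
  computable (fun w => bsum (F w) (B w)).
Proof.
move=> HF; apply: (@computable_iter (fun _ => 0) B (fun w k a => a + F w k)
                                   (fun w => bsum (F w))) => //.
- exact: computable_const.
- exact: computable_add computable_acc (computable_step_args HF).
Qed.

Lemma computable_ball (P : nat -> nat -> bool) B :
  computable_pred (fun u => P (unpair1 u) (unpair2 u)) -> computable B ->
  computable_pred (fun w => ball (P w) (B w)).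
Proof.
move=> HP; apply: (@computable_iter (fun _ => 1) B (fun w k a => a * P w k)
                                   (fun w k => nat_of_bool (ball (P w) k))) => //.
- by move=> w k /=; case: (ball _ _); case: (P w k).
- exact: computable_const.
- exact: computable_mul computable_acc (@computable_step_args (fun a b => P a b) HP).
Qed.

Lemma bsum_ltn c m : bsum (fun k => k < c) m = minn c m.
Proof.
elim: m => [|m IH] /=; first by rewrite minn0.
by rewrite IH; case: (ltnP m c) => h /=; lia.
Qed.

Lemma computable_div f g : computable f -> computable g -> computable (fun x => f x %/ g x).
Proof.
move=> Hf Hg; apply: (@eq_computable (fun x => if g x == 0 then 0 else
                   bsum (fun k => k.+1 * g x <= f x) (f x))).
  move=> x /=; case: eqP => [->|/eqP gx0]; first by rewrite divn0.
  rewrite -[RHS](minn_idPl (leq_div (f x) (g x))) -bsum_ltn.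
  by congr bsum; apply: functional_extensionality => k; rewrite -leq_divRL // lt0n.
apply: computable_if (computable_eq Hg (computable_const 0)) (computable_const 0) _.
apply: (computable_bsum _ Hf).
apply: computable_leq (computable_env Hf).
exact: computable_mul (computable_succ (computable_unpair2 computable_id)) (computable_env Hg).
Qed.

Lemma computable_mod f g : computable f -> computable g -> computable (fun x => f x %% g x).
Proof.
move=> Hf Hg; apply: (@eq_computable (fun x => f x - f x %/ g x * g x)).
  by move=> x /=; rewrite {1}(divn_eq (f x) (g x)) addKn.
exact: computable_sub Hf (computable_mul (computable_div Hf Hg) Hg).
Qed.

Ltac computable_step :=
  cbv beta;
  match goal with
  | |- computable_pred _ =>
      first [ apply: computable_and | apply: computable_or | apply: computable_neg
            | apply: computable_leq | apply: computable_eq | apply: computable_odd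
            | apply: computable_ball ]
  | |- computable (fun x => nat_of_bool (@?P x)) => change (computable_pred P)
  | |- computable (fun _ => if _ then _ else _) => apply: computable_if
  | |- computable _ =>
      first [ exact: computable_id | exact: computable_const
            | apply: computable_unpair1 | apply: computable_unpair2
            | apply: computable_succ | apply: computable_add | apply: computable_sub
            | apply: computable_mul | apply: computable_div | apply: computable_mod
            | apply: computable_exp | apply: computable_bsum ]
  end.

Ltac solve_computable := repeat computable_step.

(** * Blocked strings *)

Definition row_start n a := bsum (fun a' => n - a'.+1) a.
Definition pair_pos n a b := row_start n a + (b - a.+1).
Definition edge_pos n a b := if a < b then pair_pos n a b else pair_pos n b a.
Definition npairs n := row_start n n.

(* [bit L X p] is the [p]-th bit of the length-[L] string with code [X]
   (see [b2n_bin_val] below); these codes are the [X] with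
   [codes_length L X]. *)
Definition bit L X p := odd ((X - (2 ^ L - 1)) %/ 2 ^ p).
Definition codes_length L X := (2 ^ L - 1 <= X) && (X < 2 ^ L.+1 - 1).

Definition nbr_rank n i (e : nat -> bool) h :=
  bsum (fun h' => (h' != i) && e (edge_pos n i h')) h.

Definition blocked n i j K (e : nat -> bool) :=
  ~~ e (edge_pos n i j) &&
  ball (fun h => [|| h == i, ~~ e (edge_pos n i h), K <= nbr_rank n i e h
                   | ~~ e (edge_pos n h j)]) n.

Definition ilog2 n := bsum (fun m => 2 ^ m.+1 <= n) n.

(** * The decoder *)

(* The decoder reads its input as [cpair (i + n * (j + n * r)) (cpair n D)]. *)
Definition dec_n z := unpair1 (unpair2 z).
Definition dec_D z := unpair2 (unpair2 z).
Definition dec_i z := unpair1 z %% dec_n z.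
Definition dec_j z := unpair1 z %/ dec_n z %% dec_n z.
Definition dec_rank z := unpair1 z %/ dec_n z %/ dec_n z.
Definition dec_K z := dec_D z + 3 * ilog2 (dec_n z).

Definition blocked_code n i j K X :=
  codes_length (npairs n) X && blocked n i j K (bit (npairs n) X).

Definition candidate z X := blocked_code (dec_n z) (dec_i z) (dec_j z) (dec_K z) X.

Definition ncandidates z m := bsum (candidate z) m.

(* Minimising [search_key] in its second argument finds the candidate of
   rank [dec_rank z]. *)
Definition search_key u :=
  (dec_rank (unpair1 u)).+1 - ncandidates (unpair1 u) (unpair2 u).+1.

Lemma computable_search_key : computable search_key.
Proof.
rewrite /search_key /ncandidates /candidate /blocked_code /blocked /codes_length
  /nbr_rank /bit /edge_pos /pair_pos /npairs /row_start /dec_K /ilog2 /dec_rank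
  /dec_i /dec_j /dec_n /dec_D.
solve_computable.
Qed.

Lemma computable_mu h : computable h -> exists c, forall x n,
  h (cpair x n) = 0 -> (forall m, m < n -> 0 < h (cpair x m)) -> eval c x n.
Proof.
move=> [ch Hh]; exists (cMu ch) => x n H0 Hlt.
apply: eMu; first by rewrite -H0.
by move=> m /Hlt; case E: (h (cpair x m)) => [|k] // _; exists k; rewrite -E.
Qed.

Lemma bsum_mono F m1 m2 : m1 <= m2 -> bsum F m1 <= bsum F m2.
Proof.
move/subnK <-; elim: (m2 - m1) => [|d IH] //.
by rewrite addSn /=; apply: leq_trans IH (leq_addr _ _).
Qed.

Lemma decoder_spec : exists c, forall z X,
  candidate z X -> ncandidates z X = dec_rank z -> eval c z X.
Proof.
have [c Hc] := computable_mu computable_search_key.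
exists c => z X HX Hrank; apply: Hc.
  rewrite /search_key unpair1_cpair unpair2_cpair /ncandidates /=.
  by rewrite -/(ncandidates z X) Hrank HX addn1 subnn.
move=> m Hm; rewrite /search_key unpair1_cpair unpair2_cpair subn_gt0 ltnS -Hrank.
exact: bsum_mono.
Qed.

(** * Bijective base 2 *)

Fixpoint bin_val (s : seq bool) : nat := if s is b :: s' then b + (bin_val s').*2 else 0.

Lemma b2n_bin_val s : b2n s = (2 ^ size s).-1 + bin_val s.
Proof.
elim: s => [|b s IH] //=.
rewrite IH expnS; have := expn_gt0 2 (size s); case: (2 ^ size s) => [|e] //= _.
case: b => /=; rewrite -!muln2; lia.
Qed.

Lemma bin_val_lt s : bin_val s < 2 ^ size s.
Proof. by elim: s => [|b s IH] //=; rewrite expnS -!muln2; case: b => /=; lia. Qed.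

Lemma bin_val_bit s p : odd (bin_val s %/ 2 ^ p) = nth false s p.
Proof.
elim: s p => [|b s IH] [|p] /=; rewrite ?div0n ?nth_nil //.
  by rewrite expn0 divn1 oddD odd_double; case: b.
by rewrite expnS divnMA -IH -muln2 divnDMl //; case: b.
Qed.

Lemma b2n_surj v : exists q, b2n q = v.
Proof.
elim/ltn_ind: v => -[|v] IH; first by exists [::].
have [q Hq] : exists q, b2n q = v./2 by apply: IH; rewrite ltn_half_double -addnn; lia.
exists (odd v :: q) => /=; rewrite Hq -[in RHS](odd_double_half v).
by case: (odd v); lia.
Qed.

Lemma b2n_size q : 2 ^ size q <= (b2n q).+1.
Proof. rewrite b2n_bin_val; have := expn_gt0 2 (size q); lia. Qed.

Lemma eq_from_bits x y : (forall p, odd (x %/ 2 ^ p) = odd (y %/ 2 ^ p)) -> x = y.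
Proof.
move: {2}(x + y) (leqnn (x + y)) => s; elim: s x y => [|s IH] x y Hs Hbits.
  by apply/eqP; rewrite eqn_leq; lia.
have Hodd := Hbits 0; rewrite expn0 !divn1 in Hodd.
have Hhalf : x./2 = y./2.
  case: (posnP (x + y)) => [/eqP|Hpos]; first by rewrite addn_eq0 => /andP[/eqP-> /eqP->].
  apply: IH; first by rewrite -!divn2; lia.
  by move=> p; rewrite -!divn2 -!divnMA -!expnS Hbits.
by rewrite -(odd_double_half x) -(odd_double_half y) Hodd Hhalf.
Qed.

(** * Positions of the edge bits in E(G) *)

Lemma row_startS n a : row_start n a.+1 = row_start n a + (n - a.+1).
Proof. by []. Qed.

Lemma row_start_mono n a b : a <= b -> row_start n a <= row_start n b.
Proof. exact: bsum_mono. Qed.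

Lemma pair_pos_bounds n a b : a < b -> b < n ->
  row_start n a <= pair_pos n a b < row_start n a.+1.
Proof. by move=> ab bn; rewrite /pair_pos row_startS; lia. Qed.

Lemma pair_pos_inj n a b a' b' : a < b -> b < n -> a' < b' -> b' < n ->
  pair_pos n a b = pair_pos n a' b' -> a = a' /\ b = b'.
Proof.
move=> ab bn ab' bn' E.
have := pair_pos_bounds ab bn; have := pair_pos_bounds ab' bn'.
case: (ltngtP a a') => aa'.
- by have := row_start_mono n aa'; lia.
- by have := row_start_mono n aa'; lia.
- by subst a'; move: E; rewrite /pair_pos; lia.
Qed.

Lemma edge_posC n a b : edge_pos n a b = edge_pos n b a.
Proof. by rewrite /edge_pos; case: (ltngtP a b) => // ->. Qed.

Lemma edge_pos_inj n a b a' b' : a != b -> a' != b' ->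
  a < n -> b < n -> a' < n -> b' < n ->
  edge_pos n a b = edge_pos n a' b' -> (a = a' /\ b = b') \/ (a = b' /\ b = a').
Proof.
move=> /eqP ab /eqP ab' an bn an' bn'.
rewrite /edge_pos; case: (ltngtP a b) => h1; case: (ltngtP a' b') => h2 E //.
- by have [] := pair_pos_inj h1 bn h2 bn' E; lia.
- by have [] := pair_pos_inj h1 bn h2 an' E; lia.
- by have [] := pair_pos_inj h1 an h2 bn' E; lia.
- by have [] := pair_pos_inj h1 an h2 an' E; lia.
Qed.

Lemma edge_pos_lt n a b : a != b -> a < n -> b < n -> edge_pos n a b < npairs n.
Proof.
move=> /eqP ab an bn; rewrite /edge_pos /npairs.
case: (ltngtP a b) => h //.
  by have := pair_pos_bounds h bn; have := row_start_mono n an; lia.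
by have := pair_pos_bounds h an; have := row_start_mono n bn; lia.
Qed.

Lemma row_start_double n m : m <= n -> row_start n m * 2 = m * (n.*2 - m.+1).
Proof.
elim: m => [|m IH] // Sm; rewrite row_startS mulnDl (IH (ltnW Sm)).
have -> : n.*2 - m.+1 = m + (n - m.+1) * 2 + 1 by rewrite -!muln2; lia.
have -> : n.*2 - m.+2 = m + (n - m.+1) * 2 by rewrite -!muln2; lia.
nia.
Qed.

Lemma npairsE n : npairs n = n * (n - 1) %/ 2.
Proof.
have := row_start_double (leqnn n); rewrite /npairs => h.
have -> : n * (n - 1) = row_start n n * 2 by rewrite h -muln2; congr (_ * _); lia.
by rewrite mulnK.
Qed.

Lemma nth_flatten T (x0 : T) (ss : seq (seq T)) a k :
  a < size ss -> k < size (nth [::] ss a) ->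
  nth x0 (flatten ss) (sumn (map size (take a ss)) + k) = nth x0 (nth [::] ss a) k.
Proof.
elim: ss a => [|s ss IH] [|a] //= ha hk; first by rewrite add0n nth_cat hk.
by rewrite nth_cat -addnA ltnNge leq_addr /= addKn IH.
Qed.

Definition lexrow n (i : 'I_n) :=
  [seq (i, j) | j <- [seq j <- enum 'I_n | (nat_of_ord i < nat_of_ord j)%N]].

Lemma val_filter_gt n (i : 'I_n) :
  map val [seq j <- enum 'I_n | (nat_of_ord i < nat_of_ord j)%N] = iota i.+1 (n - i.+1).
Proof.
rewrite -filter_map val_enum_ord.
rewrite (_ : iota 0 n = iota 0 i.+1 ++ iota i.+1 (n - i.+1)); last by rewrite -iotaD subnKC.
rewrite filter_cat.
rewrite (eq_in_filter (a2 := pred0)); last by move=> k; rewrite mem_iota /=; lia.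
rewrite filter_pred0 (eq_in_filter (a2 := predT)) ?filter_predT //.
by move=> k; rewrite mem_iota /=; lia.
Qed.

Lemma size_lexrow n (i : 'I_n) : size (lexrow i) = n - i.+1.
Proof. by rewrite /lexrow size_map -(size_map val) val_filter_gt size_iota. Qed.

Lemma row_startE n a : a <= n ->
  sumn (map size (take a (map (@lexrow n) (enum 'I_n)))) = row_start n a.
Proof.
move=> an.
have -> : map size (take a (map (@lexrow n) (enum 'I_n))) =
          map (fun k => n - k.+1) (iota 0 a).
  rewrite -map_take -map_comp (eq_map (g := (fun k => n - k.+1) \o val)).
    by rewrite map_comp map_take val_enum_ord take_iota (minn_idPl an).
  by move=> i /=; rewrite size_lexrow.
elim: a an => [|a IH] an //.
by rewrite -addn1 iotaD map_cat sumn_cat IH 1?ltnW //= addn0 add0n addn1.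
Qed.

Lemma size_lexpairs n : size (lexpairs n) = npairs n.
Proof.
rewrite size_flatten /shape /npairs -(row_startE (leqnn n)) take_oversize //.
by rewrite size_map size_enum_ord.
Qed.

Lemma nth_lexpairs n (a b : 'I_n) x0 : a < b ->
  nth x0 (lexpairs n) (pair_pos n a b) = (a, b).
Proof.
move=> ab.
have size_rows : a < size (map (@lexrow n) (enum 'I_n)) by rewrite size_map size_enum_ord.
have size_row : b - a.+1 < size (nth [::] (map (@lexrow n) (enum 'I_n)) a).
  by rewrite (nth_map a) ?size_enum_ord // nth_ord_enum size_lexrow; have := ltn_ord b; lia.
rewrite /pair_pos -(row_startE (ltnW (ltn_ord a))) [lexpairs n]/= nth_flatten //.
rewrite (nth_map a) ?size_enum_ord // nth_ord_enum /lexrow (nth_map a); last first.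
  by rewrite -(size_map val) val_filter_gt size_iota; have := ltn_ord b; lia.
congr (_, _); apply: val_inj; rewrite -(nth_map a 0); last first.
  by rewrite -(size_map val) val_filter_gt size_iota; have := ltn_ord b; lia.
by rewrite val_filter_gt nth_iota /=; have := ltn_ord b; lia.
Qed.

Lemma size_E n (G : rel 'I_n) : size (E G) = npairs n.
Proof. by rewrite size_map size_lexpairs. Qed.

Lemma nth_E n (G : rel 'I_n) (a b : 'I_n) : symmetric G -> a != b ->
  nth false (E G) (edge_pos n a b) = G a b.
Proof.
move=> Gsym; wlog ab : a b / a < b => [W|] ab'.
  case: (ltngtP a b) => h; first exact: W.
  - by rewrite edge_posC Gsym; apply: W; rewrite // eq_sym.
  - by move: ab'; rewrite (val_inj h) eqxx.
have := edge_pos_lt ab' (ltn_ord a) (ltn_ord b).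
rewrite /edge_pos ab => Hlt; rewrite (nth_map (a, a)) ?nth_lexpairs //.
by rewrite size_lexpairs.
Qed.

(** * Counting the blocked strings *)

Lemma ballP (P : nat -> bool) m : reflect (forall h, h < m -> P h) (ball P m).
Proof.
elim: m => [|m IH] /=; first by constructor.
apply: (iffP andP) => [[/IH Hlt Pm] h|H].
  by rewrite ltnS leq_eqVlt => /predU1P [->|/Hlt].
by split; [apply/IH => h hm; apply: H; apply: ltnW | apply: H].
Qed.

Lemma eq_bsum_lt (F1 F2 : nat -> nat) m :
  (forall h, h < m -> F1 h = F2 h) -> bsum F1 m = bsum F2 m.
Proof.
elim: m => [|m IH] //= H; rewrite H // IH // => h hm; apply: H; exact: ltnW.
Qed.

Lemma bsum_count (P : nat -> bool) m : bsum P m = count P (iota 0 m).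
Proof.
elim: m => [|m IH] //.
by rewrite -addn1 iotaD count_cat -IH /= !addn0 addn1.
Qed.

Lemma card_ord_bsum m (P : nat -> bool) : #|[set x : 'I_m | P x]| = bsum P m.
Proof.
rewrite bsum_count cardsE cardE -deprecated_filter_index_enum size_filter.
by rewrite /index_enum; unlock; rewrite -enumT -val_enum_ord count_map.
Qed.

Lemma size_filter_ord_bsum m (P : nat -> bool) :
  size [seq h <- enum 'I_m | P (nat_of_ord h)] = bsum P m.
Proof. by rewrite bsum_count size_filter -val_enum_ord count_map. Qed.

Lemma bsum_ltn_and (P : nat -> bool) h m : h <= m ->
  bsum (fun k => (k < h) && P k) m = bsum P h.
Proof.
move/subnKC <-; elim: (m - h) => [|d IH].
  by rewrite addn0; apply: eq_bsum_lt => k ->.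
by rewrite addnS /= IH ltnNge leq_addr /= addn0.
Qed.

Lemma eq_nbr_rank n i (e1 e2 : nat -> bool) m :
  (forall h, h < m -> h != i -> e1 (edge_pos n i h) = e2 (edge_pos n i h)) ->
  nbr_rank n i e1 m = nbr_rank n i e2 m.
Proof.
by move=> H; apply: eq_bsum_lt => h hm; case: eqP => [//|/eqP hi] /=; rewrite H.
Qed.

Lemma nbr_rank_ivt n i (e : nat -> bool) m l : l < nbr_rank n i e m ->
  exists h, [/\ h < m, h != i, e (edge_pos n i h) & nbr_rank n i e h = l].
Proof.
elim: m => [|m IH] //.
have -> : nbr_rank n i e m.+1 = nbr_rank n i e m + ((m != i) && e (edge_pos n i m)) by [].
case: (ltnP l (nbr_rank n i e m)) => hl.
  by move=> _; have [h [? ? ? ?]] := IH hl; exists h; split => //; apply: ltnW.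
case E: ((m != i) && e (edge_pos n i m)); rewrite ?addn0 ?addn1 => hlt; last by lia.
by move/andP: E => [mi em]; exists m; split => //; lia.
Qed.

Lemma nth_mktuple_lt L (f : 'I_L -> bool) p (hp : p < L) :
  nth false [tuple f i | i < L] p = f (Ordinal hp).
Proof. exact: (nth_mktuple f false (Ordinal hp)). Qed.

Lemma eq_tuple_nth L (t1 t2 : L.-tuple bool) :
  (forall p, p < L -> nth false t1 p = nth false t2 p) -> t1 = t2.
Proof.
move=> H; apply: val_inj; apply: (@eq_from_nth _ false); first by rewrite !size_tuple.
by move=> p; rewrite size_tuple; apply: H.
Qed.

Section HighDegree.

Variables (n K : nat) (i j : 'I_n).
Hypothesis ij : i != j.

Definition forced (t : seq bool) (h : 'I_n) :=
  [&& h != i, h != j, nth false t (edge_pos n i h) & nbr_rank n i (nth false t) h < K].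

Definition blocked_rich := [set t : (npairs n).-tuple bool |
  blocked n i j K (nth false t) && (K <= nbr_rank n i (nth false t) n)].

(* The bit (h, j) of each forced neighbour [h] is replaced by the bit of [w]
   at the rank of [h]; these bits are 0 in every string of [blocked_rich], so
   nothing is lost. *)
Definition overwrite_forced (tw : (npairs n).-tuple bool * {ffun 'I_K -> bool}) :=
  [tuple match [pick h | forced tw.1 h && (edge_pos n h j == p)] with
         | Some h => nth false (fgraph tw.2) (nbr_rank n i (nth false tw.1) h)
         | None => nth false tw.1 p end | p < npairs n].

Lemma overwrite_forced_row
    (tw : (npairs n).-tuple bool * {ffun 'I_K -> bool}) (h : 'I_n) : h != i ->
  nth false (overwrite_forced tw) (edge_pos n i h) = nth false tw.1 (edge_pos n i h).
Proof.
move=> hi; have hp : edge_pos n i h < npairs n by apply: edge_pos_lt; rewrite // eq_sym.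
rewrite /overwrite_forced (nth_mktuple_lt _ hp) /=.
case: pickP => [h' /andP [/and4P [h'i h'j _ _] /eqP E] | //].
have ih : nat_of_ord i != h by rewrite eq_sym.
have [[/val_inj E1 _]|[_ /val_inj E2]] :=
  edge_pos_inj h'j ih (ltn_ord h') (ltn_ord j) (ltn_ord i) (ltn_ord h) E.
- by move: h'i; rewrite E1 eqxx.
- by move: ij; rewrite E2 eqxx.
Qed.

Lemma overwrite_forced_at
    (tw : (npairs n).-tuple bool * {ffun 'I_K -> bool}) (h : 'I_n) : forced tw.1 h ->
  nth false (overwrite_forced tw) (edge_pos n h j) =
  nth false (fgraph tw.2) (nbr_rank n i (nth false tw.1) h).
Proof.
move=> Fh; move: (Fh) => /and4P [_ hj _ _].
have hp : edge_pos n h j < npairs n by apply: edge_pos_lt.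
rewrite /overwrite_forced (nth_mktuple_lt _ hp) /=.
case: pickP => [h' /andP [/and4P [_ h'j _ _] /eqP E] | /(_ h)]; last by rewrite Fh eqxx.
have [[/val_inj -> _]|[_ /val_inj E2]] :=
  edge_pos_inj h'j hj (ltn_ord h') (ltn_ord j) (ltn_ord h) (ltn_ord j) E => //.
by move: hj; rewrite E2 eqxx.
Qed.

Lemma forced_bit (t : seq bool) (h : 'I_n) :
  blocked n i j K (nth false t) -> forced t h -> nth false t (edge_pos n h j) = false.
Proof.
move=> /andP [_ /ballP Hall] /and4P [hi _ ih hK].
move: (Hall h (ltn_ord h)); rewrite (negbTE (hi : nat_of_ord h != i)) ih /= leqNgt hK /=.
exact: negbTE.
Qed.

Lemma overwrite_forced_inj :
  {in setX blocked_rich [set: {ffun 'I_K -> bool}] &, injective overwrite_forced}.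
Proof.
move=> [t1 w1] [t2 w2] /setXP [+ _] /setXP [+ _] E.
rewrite !inE => /andP [B1 K1] /andP [B2 K2].
have Erow (h : 'I_n) : h != i -> nth false t1 (edge_pos n i h) = nth false t2 (edge_pos n i h).
  by move=> hi; rewrite -(overwrite_forced_row (t1, w1) hi) E overwrite_forced_row.
have Eforced : forced t1 =1 forced t2.
  move=> h; rewrite /forced; case: (boolP (h != i)) => //= hi.
  rewrite Erow // (@eq_nbr_rank _ _ _ (nth false t2)) // => h' h'h h'i.
  exact: (Erow (Ordinal (ltn_trans h'h (ltn_ord h)))).
have Et : t1 = t2.
  apply: eq_tuple_nth => p hp.
  have := congr1 (fun t : (npairs n).-tuple bool => nth false t p) E.
  rewrite /overwrite_forced !(nth_mktuple_lt _ hp) /=.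
  rewrite (eq_pick (Q := fun h => forced t2 h && (edge_pos n h j == p))); last first.
    by move=> h /=; rewrite Eforced.
  case: pickP => [h /andP [Fh /eqP <-] _ | _ //].
  by rewrite (forced_bit B2 Fh) forced_bit // Eforced.
subst t2; congr (_, _); apply/ffunP => l.
have [h [hn hi ih hrank]] := nbr_rank_ivt (leq_trans (ltn_ord l) K1).
have hj : h != j by apply/eqP => hj; move: B1; rewrite /blocked -hj ih.
pose ho := Ordinal hn.
have Fh : forced t1 ho by rewrite /forced /= hi hj ih hrank ltn_ord.
have := congr1 (fun t : (npairs n).-tuple bool => nth false t (edge_pos n ho j)) E.
by rewrite !overwrite_forced_at //= hrank !nth_fgraph_ord.
Qed.

Lemma card_blocked_rich : #|blocked_rich| * 2 ^ K <= 2 ^ npairs n.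
Proof.
have := card_in_imset overwrite_forced_inj.
rewrite cardsX cardsT card_ffun card_bool card_ord => <-.
by apply: leq_trans (max_card _) _; rewrite card_tuple card_bool.
Qed.

End HighDegree.

Section LowDegree.

Variables (n K : nat) (i : 'I_n).

Definition nbrs (t : seq bool) :=
  [seq h <- enum 'I_n | (nat_of_ord h != i) && nth false t (edge_pos n i h)].

Definition nbr_list (t : seq bool) : {ffun 'I_K -> option 'I_n} :=
  [ffun l : 'I_K => nth None (map Some (nbrs t)) l].

Definition sparse := [set t : (npairs n).-tuple bool | nbr_rank n i (nth false t) n < K].

(* The row of [i] is overwritten by [w], and is recorded instead by the list
   of the (fewer than [K]) neighbours of [i]; the bit [w i] is kept aside. *)
Definition replace_row (tw : (npairs n).-tuple bool * {ffun 'I_n -> bool}) :=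
  ([tuple match [pick h | (h != i) && (edge_pos n i h == p)] with
          | Some h => tw.2 h
          | None => nth false tw.1 p end | p < npairs n],
   nbr_list tw.1, tw.2 i).

Lemma size_nbrs t : size (nbrs t) = nbr_rank n i (nth false t) n.
Proof. exact: size_filter_ord_bsum. Qed.

Lemma mem_nbrs t (h : 'I_n) :
  (h \in nbrs t) = (nat_of_ord h != i) && nth false t (edge_pos n i h).
Proof. by rewrite mem_filter mem_enum andbT. Qed.

Lemma mem_codom_nbr_list t (h : 'I_n) : size (nbrs t) <= K ->
  (Some h \in codom (nbr_list t)) = (h \in nbrs t).
Proof.
move=> sK; apply/codomP/idP => [[l]|hin].
  rewrite ffunE; case: (ltnP l (size (nbrs t))) => hl.
    by rewrite (nth_map h) // => [[->]]; apply: mem_nth.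
  by rewrite nth_default ?size_map.
have hl : index h (nbrs t) < K by apply: leq_trans sK; rewrite index_mem.
by exists (Ordinal hl); rewrite ffunE /= (nth_map h) ?index_mem // nth_index.
Qed.

Lemma replace_row_inj :
  {in setX sparse [set: {ffun 'I_n -> bool}] &, injective replace_row}.
Proof.
move=> [t1 w1] [t2 w2] /setXP [+ _] /setXP [+ _] E.
rewrite !inE => K1 K2.
have Et := congr1 (fun x => x.1.1) E; have Elist := congr1 (fun x => x.1.2) E.
have Ewi := congr1 snd E; rewrite /= in Et Elist Ewi.
have S1 : size (nbrs t1) <= K by rewrite size_nbrs ltnW.
have S2 : size (nbrs t2) <= K by rewrite size_nbrs ltnW.
have Erow (h : 'I_n) : h != i -> nth false t1 (edge_pos n i h) = nth false t2 (edge_pos n i h).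
  move=> hi; have := mem_codom_nbr_list h S1.
  rewrite Elist (mem_codom_nbr_list h S2) !mem_nbrs.
  by rewrite (hi : nat_of_ord h != i) /= => ->.
have Eword : t1 = t2.
  apply: eq_tuple_nth => p hp.
  have := congr1 (fun t : (npairs n).-tuple bool => nth false t p) Et.
  rewrite !(nth_mktuple_lt _ hp) /=.
  by case: pickP => [h /andP [hi /eqP <-] _ | _ //]; rewrite Erow.
subst t2; congr (_, _); apply/ffunP => h.
case: (eqVneq h i) => [->|hi] //.
have hp : edge_pos n i h < npairs n by apply: edge_pos_lt; rewrite // eq_sym.
have := congr1 (fun t : (npairs n).-tuple bool => nth false t (edge_pos n i h)) Et.
rewrite !(nth_mktuple_lt _ hp) /=.
case: pickP => [h' /andP [h'i /eqP Eh'] | /(_ h)]; last by rewrite hi eqxx.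
suff -> : h' = h by [].
have ih : nat_of_ord i != h by rewrite eq_sym.
have ih' : nat_of_ord i != h' by rewrite eq_sym.
have [[_ /val_inj //]|[/val_inj E1 _]] :=
  edge_pos_inj ih' ih (ltn_ord i) (ltn_ord h') (ltn_ord i) (ltn_ord h) Eh'.
by move: ih; rewrite E1 eqxx.
Qed.

Lemma card_sparse : #|sparse| * 2 ^ n <= 2 ^ (npairs n).+1 * n.+1 ^ K.
Proof.
have := card_in_imset replace_row_inj.
rewrite cardsX cardsT card_ffun card_bool card_ord => <-.
apply: leq_trans (max_card _) _.
rewrite !card_prod card_tuple card_ffun card_option !card_bool !card_ord expnS.
by rewrite mulnC mulnA.
Qed.

End LowDegree.

(** * Compressing E(G) *)

Lemma bit_b2n s p : bit (size s) (b2n s) p = nth false s p.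
Proof. by rewrite /bit b2n_bin_val subn1 addKn bin_val_bit. Qed.

Lemma codes_length_b2n s : codes_length (size s) (b2n s).
Proof.
rewrite /codes_length b2n_bin_val subn1 leq_addr /=.
by have := bin_val_lt s; have := expn_gt0 2 (size s); rewrite expnS; lia.
Qed.

Lemma bit_tuple L X p : codes_length L X ->
  bit L X p = nth false [tuple bit L X q | q < L] p.
Proof.
move=> /andP [_ XL]; case: (ltnP p L) => pL; first by rewrite (nth_mktuple_lt _ pL).
rewrite nth_default ?size_tuple // /bit divn_small //.
apply: leq_trans (leq_pexp2l (isT : 0 < 2) pL).
by move: XL; rewrite expnS; have := expn_gt0 2 L; lia.
Qed.

Lemma count_blocked_codes n (i j : 'I_n) K m : i != j ->
  bsum (blocked_code n i j K) m <= #|blocked_rich K i j| + #|sparse K i|.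
Proof.
move=> ij; rewrite -card_ord_bsum.
set S := [set x : 'I_m | blocked_code n i j K x].
pose f (x : 'I_m) := [tuple bit (npairs n) x q | q < npairs n].
have f_inj : {in S &, injective f}.
  move=> x y; rewrite !inE => /andP [cx _] /andP [cy _] Efxy; apply: ord_inj.
  have Ebits p : bit (npairs n) x p = bit (npairs n) y p.
    by rewrite (bit_tuple p cx) (bit_tuple p cy) -/(f x) -/(f y) Efxy.
  by have := eq_from_bits Ebits; move: cx cy => /andP [? _] /andP [? _]; lia.
rewrite -(card_in_imset f_inj).
apply: leq_trans (leq_card_setU _ _).
apply: subset_leq_card; apply/subsetP => t /imsetP [x]; rewrite inE => /andP [cx Bx] ->.
have Ebit : nth false (f x) = bit (npairs n) x.
  by apply: functional_extensionality => p; rewrite (bit_tuple p cx).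
by rewrite !inE Ebit Bx /=; case: leqP.
Qed.

Lemma adj_nth_E n (G : rel 'I_n) (i h : 'I_n) : is_graph G ->
  G i h = (nat_of_ord h != i) && nth false (E G) (edge_pos n i h).
Proof.
move=> [Girr Gsym]; case: (eqVneq h i) => [->|hi]; first by rewrite Girr eqxx.
by rewrite (hi : nat_of_ord h != i) nth_E // eq_sym.
Qed.

Lemma card_smaller_nbrs n (G : rel 'I_n) (i h : 'I_n) : is_graph G ->
  #|[set h' | G i h' & (h' < h)%N]| = nbr_rank n i (nth false (E G)) h.
Proof.
move=> HG; rewrite /nbr_rank -(bsum_ltn_and
  (fun k => (k != i) && nth false (E G) (edge_pos n i k)) (ltnW (ltn_ord h))).
rewrite -card_ord_bsum.
by apply: eq_card => h'; rewrite !inE (adj_nth_E _ _ HG) andbC.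
Qed.

Lemma blocked_E n (G : rel 'I_n) (i j : 'I_n) K : is_graph G -> i != j -> ~~ G i j ->
  (forall h : 'I_n, G i h -> #|[set h' | G i h' & (h' < h)%N]| < K -> ~~ G h j) ->
  blocked n i j K (nth false (E G)).
Proof.
move=> HG ij Gij Hnbr; have [_ Gsym] := HG.
rewrite /blocked nth_E // Gij /=; apply/ballP => h hn.
pose ho := Ordinal hn.
case: (eqVneq h i) => [//|hi] /=.
have := adj_nth_E i ho HG; rewrite /= hi /= => <-.
case Gih: (G i ho) => //=; case: leqP => //= hK.
have hj : ho != j by apply: contraNneq Gij => <-; rewrite Gih.
by rewrite (nth_E Gsym hj) Hnbr // card_smaller_nbrs.
Qed.

Lemma dec_input n D i j r : i < n -> j < n ->
  let z := cpair (i + n * (j + n * r)) (cpair n D) in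
  [/\ dec_n z = n, dec_i z = i, dec_j z = j, dec_rank z = r & dec_K z = D + 3 * ilog2 n].
Proof.
move=> iN jN z.
have En : dec_n z = n by rewrite /dec_n /z unpair2_cpair unpair1_cpair.
have Ev : unpair1 z = i + n * (j + n * r) by rewrite /z unpair1_cpair.
have Ediv : (i + n * (j + n * r)) %/ n = j + n * r.
  by rewrite addnC mulnC divnMDl ?divn_small ?addn0 //; lia.
rewrite /dec_i /dec_j /dec_rank /dec_K /dec_D En Ev Ediv.
split => //.
- by rewrite addnC mulnC modnMDl modn_small.
- by rewrite addnC mulnC modnMDl modn_small.
- by rewrite addnC mulnC divnMDl ?divn_small ?addn0 //; lia.
- by rewrite /z !unpair2_cpair.
Qed.

Lemma short_description (dc : code)
    (Hdc : forall z X, candidate z X -> ncandidates z X = dec_rank z -> eval dc z X)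
    n (G : rel 'I_n) (i j : 'I_n) D (K := D + 3 * ilog2 n) :
  is_graph G -> i != j -> ~~ G i j ->
  (forall h : 'I_n, G i h -> #|[set h' | G i h' & (h' < h)%N]| < K -> ~~ G h j) ->
  exists q, U (nseq (pickle dc) true ++ false :: q) (cpair n D) (b2n (E G)) /\
     2 ^ size q <= n ^ 2 * (#|blocked_rich K i j| + #|sparse K i|).
Proof.
move=> HG ij Gij Hnbr.
have BE : blocked_code n i j K (b2n (E G)).
  rewrite /blocked_code -(size_E G) codes_length_b2n /=.
  have -> : bit (size (E G)) (b2n (E G)) = nth false (E G).
    by apply: functional_extensionality => p; rewrite bit_b2n.
  exact: blocked_E.
set r := bsum (blocked_code n i j K) (b2n (E G)).
have rlt : r < #|blocked_rich K i j| + #|sparse K i|.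
  by have := count_blocked_codes K (b2n (E G)).+1 ij; rewrite /= -/r BE addn1.
have [q Eq] := b2n_surj (i + n * (j + n * r)).
exists q; split.
  exists (pickle dc), q, dc; split => //; split; first exact: pickleK.
  have [En Ei Ej Er EK] := dec_input D r (ltn_ord i) (ltn_ord j); rewrite -Eq in En Ei Ej Er EK.
  apply: Hdc; first by rewrite /candidate En Ei Ej EK.
  by rewrite Er /ncandidates /candidate En Ei Ej EK.
apply: leq_trans (b2n_size q) _; rewrite Eq.
apply: leq_trans (_ : n ^ 2 * r.+1 <= _); last by rewrite leq_mul2l rlt orbT.
by have := ltn_ord i; have := ltn_ord j; nia.
Qed.

(** * Estimates *)

Lemma ilog2E n : 0 < n -> ilog2 n = trunc_log 2 n.
Proof.
move=> n0; rewrite /ilog2 (@eq_bsum_lt _ (fun m => m < trunc_log 2 n)); last first.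
  move=> m _; congr nat_of_bool; apply/idP/idP => h; first exact: trunc_log_max.
  by apply: leq_trans (trunc_logP (isT : 1 < 2) n0); apply: leq_pexp2l.
rewrite bsum_ltn; apply/minn_idPl.
exact: leq_trans (ltnW (ltn_expl _ (isT : 1 < 2))) (trunc_logP (isT : 1 < 2) n0).
Qed.

Lemma ilog2_bounds n : 0 < n -> 2 ^ ilog2 n <= n < 2 ^ (ilog2 n).+1.
Proof. by move=> n0; rewrite ilog2E //; apply: trunc_log_bounds. Qed.

Lemma cube_le_exp2 t : 12 <= t -> t.+1 ^ 3 <= 2 ^ t.
Proof.
elim: t => [|t IH] //; rewrite leq_eqVlt => /predU1P [<- //|t12].
apply: leq_trans (_ : 2 * t.+1 ^ 3 <= _); last by rewrite [2 ^ t.+1]expnS leq_mul2l IH.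
have cube x : x ^ 3 = x * x * x by rewrite !expnS expn0 muln1 mulnA.
by rewrite !cube; nia.
Qed.

Lemma poly_le_exp2 a : exists T, forall t, T <= t -> a * t.+1 ^ 2 <= 2 ^ t.
Proof.
exists (maxn 12 a) => t; rewrite geq_max => /andP [t12 ta].
apply: leq_trans (cube_le_exp2 t12).
by rewrite (expnS _ 2) leq_mul2r; apply/orP; right; lia.
Qed.

Lemma leq_wexp2r m n k : m <= n -> m ^ k <= n ^ k.
Proof. by case: k => [//|k] mn; rewrite leq_exp2r. Qed.

Lemma rich_weight e D n t : n < 2 ^ t.+1 -> e + 5 <= t ->
  n ^ 2 * 2 ^ (e + D + 3) <= 2 ^ (D + 3 * t).
Proof.
move=> nlt et; have n2 : n ^ 2 <= 2 ^ (t.+1 * 2) by rewrite expnM leq_wexp2r // ltnW.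
apply: leq_trans (leq_mul n2 (leqnn _)) _.
by rewrite -expnD leq_exp2l //; lia.
Qed.

Lemma sparse_weight e C0 : exists T, forall D n t,
  2 ^ t <= n < 2 ^ t.+1 -> T <= t -> D <= C0 * t.+1 ->
  n ^ 2 * n.+1 ^ (D + 3 * t) * 2 ^ (e + D + 4) <= 2 ^ n.
Proof.
have [T HT] := poly_le_exp2 (2 * C0 + e + 9).
exists T => D n t /andP [tn nlt] Tt DC; set K := D + 3 * t.
have n2 : n ^ 2 <= 2 ^ (t.+1 * 2) by rewrite expnM leq_wexp2r // ltnW.
have nK : n.+1 ^ K <= 2 ^ (t.+1 * K) by rewrite expnM leq_wexp2r.
apply: leq_trans (leq_mul (leq_mul n2 nK) (leqnn _)) _.
rewrite -!expnD leq_exp2l //; apply: leq_trans tn; apply: leq_trans (HT t Tt).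
have tK : t.+1 * K <= (C0 + 3) * t.+1 ^ 2.
  by rewrite /K expnS expn1 mulnA [_ * t.+1]mulnC leq_mul2l; apply/orP; right; lia.
have tD : D <= C0 * t.+1 ^ 2.
  by apply: leq_trans DC _; rewrite leq_mul2l expnS expn1 leq_pmulr ?orbT.
have tS : t.+1 * 2 + e + 4 <= (e + 6) * t.+1 ^ 2 by rewrite expnS expn1; nia.
lia.
Qed.

Lemma description_bound e C0 : exists N, forall n D H S L, N <= n ->
  D <= C0 * (ilog2 n).+1 ->
  H * 2 ^ (D + 3 * ilog2 n) <= 2 ^ L ->
  S * 2 ^ n <= 2 ^ L.+1 * n.+1 ^ (D + 3 * ilog2 n) ->
  n ^ 2 * (H + S) * 2 ^ (e + D + 2) <= 2 ^ L.
Proof.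
have [T HT] := sparse_weight e C0.
exists (2 ^ maxn T (e + 5)) => n D H S L nN DC HK SK.
have n0 : 0 < n by apply: leq_trans nN; apply: expn_gt0.
have nbounds := ilog2_bounds n0; move: (nbounds) => /andP [tn nt].
have : maxn T (e + 5) <= ilog2 n.
  by rewrite -ltnS -(ltn_exp2l _ _ (isT : 1 < 2)); apply: leq_ltn_trans nN nt.
rewrite geq_max => /andP [Tt et].
have A := rich_weight D nt et.
have B := HT D n _ nbounds Tt DC.
move: HK SK A B; set t := ilog2 n; set K := D + 3 * t; set P := 2 ^ (e + D + 2).
have -> : 2 ^ (e + D + 3) = 2 * P by rewrite /P addnS expnS.
have -> : 2 ^ (e + D + 4) = 4 * P by rewrite /P !addnS !expnS mulnA.
rewrite expnS; set R := 2 ^ L; set X := n ^ 2; set W := n.+1 ^ K.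
move=> HK SK A B.
have C1 : X * H * (2 * P) <= R.
  by apply: leq_trans HK; rewrite mulnAC [H * _]mulnC leq_mul2r A orbT.
have C2 : X * S * (2 * P) <= R.
  rewrite -(leq_pmul2r (expn_gt0 2 n)).
  have := leq_mul SK (leqnn (X * (2 * P))); have := leq_mul (leqnn R) B; lia.
rewrite mulnDr mulnDl; lia.
Qed.

Local Open Scope R_scope.

Lemma ln_le x y : 0 < x -> x <= y -> ln x <= ln y.
Proof.
move=> x0 /Rle_lt_or_eq_dec [xy|->]; last exact: Rle_refl.
exact/Rlt_le/ln_increasing.
Qed.

Lemma INR_exp2 t : INR (2 ^ t)%N = 2 ^ t.
Proof. by elim: t => [|t IH] //; rewrite expnS mult_INR IH /=; lra. Qed.

Lemma log2_ge (t n : nat) : (2 ^ t <= n)%N -> INR t <= log2 (INR n).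
Proof.
move=> tn; have ln2 : 0 < ln 2 by have := ln_lt_2; lra.
have : ln (2 ^ t) <= ln (INR n).
  by apply: ln_le; [apply: pow_lt; lra | rewrite -INR_exp2; apply/le_INR/leP].
rewrite ln_pow; last lra.
by move=> H; apply: (Rmult_le_reg_r (ln 2)) => //; rewrite /log2 /Rdiv Rmult_assoc Rinv_l; lra.
Qed.

Lemma log2_lt (t n : nat) : (0 < n)%N -> (n < 2 ^ t.+1)%N -> log2 (INR n) < INR t + 1.
Proof.
move=> n0 nt; have ln2 : 0 < ln 2 by have := ln_lt_2; lra.
have : ln (INR n) < ln (2 ^ t.+1).
  by apply: ln_increasing; [apply/lt_0_INR/ltP | rewrite -INR_exp2; apply/lt_INR/ltP].
rewrite ln_pow ?S_INR; last lra.
by move=> H; apply: (Rmult_lt_reg_r (ln 2)) => //; rewrite /log2 /Rdiv Rmult_assoc Rinv_l; lra.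
Qed.

Lemma log2_ge0 n : (0 < n)%N -> 0 <= log2 (INR n).
Proof.
move=> n0; have /andP [tn _] := ilog2_bounds n0.
exact: Rle_trans (pos_INR _) (log2_ge tn).
Qed.

Lemma Int_part_nat d : 0 <= d ->
  INR (Z.to_nat (Int_part d)) <= d < INR (Z.to_nat (Int_part d)) + 1.
Proof.
move=> d0; have [h1 h2] := base_Int_part d.
have : (0 <= Int_part d)%Z.
  have [u _] := archimed d; have : (0 < up d)%Z by apply: lt_0_IZR; lra.
  by rewrite /Int_part; lia.
by move=> /Z2Nat.id E; rewrite INR_IZR_INZ E; lra.
Qed.

Lemma log_budget c n : 0 <= c -> (0 < n)%N ->
  let D := Z.to_nat (Int_part (c * log2 (INR n))) in
  (D <= Z.to_nat (up c) * (ilog2 n).+1)%N /\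
  INR (D + 3 * ilog2 n) <= (c + 3) * log2 (INR n).
Proof.
move=> c0 n0 D; have /andP [tn nt] := ilog2_bounds n0.
have tlog := log2_ge tn; have logt := log2_lt n0 nt.
have [D1 _] := Int_part_nat (Rmult_le_pos _ _ c0 (log2_ge0 n0)).
have cup : c <= INR (Z.to_nat (up c)).
  have [u _] := archimed c; have : (0 <= up c)%Z by apply: le_0_IZR; lra.
  by move=> /Z2Nat.id E; rewrite INR_IZR_INZ E; lra.
split; last by rewrite plus_INR mult_INR /=; rewrite -/D in D1; nra.
apply/leP/INR_le; rewrite mult_INR S_INR; apply: Rle_trans D1 _.
apply: Rle_trans (Rmult_le_compat_l _ _ _ c0 (Rlt_le _ _ logt)) _.
by apply: Rmult_le_compat_r => //; have := pos_INR (ilog2 n); lra.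
Qed.

Lemma random_program_size n (G : rel 'I_n) d p : 0 <= d -> random G d ->
  U p (cond n d) (b2n (E G)) -> (npairs n <= size p + Z.to_nat (Int_part d))%N.
Proof.
move=> d0 Grand Up; have := Grand p Up; rewrite -npairsE.
have [_ D2] := Int_part_nat d0; move=> H.
by rewrite -ltnS; apply/ltP/INR_lt; rewrite S_INR plus_INR; lra.
Qed.

Local Close Scope R_scope.

Theorem lemma3 (c : R) (hc : Rle 0 c) :
  exists N : nat, forall n : nat, (N <= n)%N ->
  forall G : rel 'I_n, is_graph G ->
  random G (Rmult c (log2 (INR n))) ->
  forall i j : 'I_n, j != i ->
    G i j \/ exists h : 'I_n,
      small_nbr G (Rmult (Rplus c 3) (log2 (INR n))) i h /\ G h j.
Proof.
have [dc Hdc] := decoder_spec.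
have [N HN] := description_bound (pickle dc) (Z.to_nat (up c)).
exists (maxn N 1) => n; rewrite geq_max => /andP [nN n0] G HG Grand i j ji.
have ij : i != j by rewrite eq_sym.
case Gij: (G i j); [by left | right; apply: NNPP => Hno].
have [DC KR] := log_budget hc n0.
set D := Z.to_nat _ in DC KR; set K := (D + 3 * ilog2 n)%N in KR.
have Hnbr (h : 'I_n) : G i h -> (#|[set h' | G i h' & (h' < h)%N]| < K)%N -> ~~ G h j.
  move=> Gih hK; apply/negP => Ghj; apply: Hno; exists h; do 2!split => //.
  by apply: Rlt_le_trans KR; apply/lt_INR/ltP.
have [q [Uq qlen]] := short_description Hdc HG ij (negbT Gij) Hnbr.
have := random_program_size (Rmult_le_pos _ _ hc (log2_ge0 n0)) Grand Uq.
have := HN n D _ _ (npairs n) nN DC (card_blocked_rich K ij) (card_sparse K i).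
move=> /(leq_trans (leq_mul qlen (leqnn _))).
by rewrite -expnD leq_exp2l // size_cat size_nseq /=; lia.
Qed.
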